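(* Every easy pair of words over a finite alphabet can be separated exactly by a 2-state AfA.
   Context: A pair of words $(x,y)$ means two different words over the same finite alphabet $\Sigma$; it is easy if there is $\sigma\in\Sigma$ with $|x|_\sigma\neq|y|_\sigma$, where $|w|_\sigma$ counts occurrences of $\sigma$ in $w$. An $n$-state affine finite automaton (AfA) over $\Sigma$ consists of real $n\times n$ matrices $A_\sigma$ for $\sigma\in\Sigma\cup\{\$\}$ ($\$$ a right end-marker), each of whose columns sums to $1$; an initial vector $v_0\in\mathbb{R}^n$ with entries summing to $1$; and a set $E_a$ of accepting states. On input $w=w_1\cdots w_k$ the final vector is $v_f=A_\$A_{w_k}\cdots A_{w_1}v_0$, and $w$ is accepted with probability $\sum_{j\in E_a}|v_f[j]|\big/\sum_{j=1}^n|v_f[j]|$. A pair is separated exactly if one word is accepted with probability $1$ and the other with probability $0$. *)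

From Stdlib Require Import Reals List.
Import ListNotations.
Open Scope R_scope.

Fixpoint sumR (n : nat) (f : nat -> R) : R :=
  match n with
  | O => 0
  | S k => sumR k f + f k
  end.

Definition occ {Sigma : Type} (dec : forall a b : Sigma, {a = b} + {a <> b})
  (a : Sigma) (w : list Sigma) : nat := count_occ dec w a.

Definition easy_pair {Sigma : Type} (dec : forall a b : Sigma, {a = b} + {a <> b})
  (x y : list Sigma) : Prop :=
  x <> y /\ exists a : Sigma, occ dec a x <> occ dec a y.

(* An n-state affine finite automaton over Sigma: states are 0..n-1.
   trans (Some a) is the matrix A_a, trans None is the end-marker matrix A_$.
   Matrices are given entrywise, M i j = row i, column j (only i,j < n matter). *)
Record AfA (Sigma : Type) (n : nat) : Type := mkAfA {
  trans : option Sigma -> nat -> nat -> R;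
  init  : nat -> R;
  accepting : nat -> bool
}.
Arguments trans {Sigma n} _ _ _ _.
Arguments init {Sigma n} _ _.
Arguments accepting {Sigma n} _ _.

Definition AfA_wf {Sigma : Type} {n : nat} (M : AfA Sigma n) : Prop :=
  (forall (a : option Sigma) (j : nat), (j < n)%nat ->
      sumR n (fun i => trans M a i j) = 1) /\
  sumR n (init M) = 1.

Definition mv (n : nat) (A : nat -> nat -> R) (v : nat -> R) : nat -> R :=
  fun i => sumR n (fun j => A i j * v j).

Definition final_vec {Sigma : Type} {n : nat} (M : AfA Sigma n) (w : list Sigma)
  : nat -> R :=
  mv n (trans M None)
     (fold_left (fun v a => mv n (trans M (Some a)) v) w (init M)).

Definition acc_prob {Sigma : Type} {n : nat} (M : AfA Sigma n) (w : list Sigma) : R :=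
  let vf := final_vec M w in
  sumR n (fun j => if accepting M j then Rabs (vf j) else 0) /
  sumR n (fun j => Rabs (vf j)).

Definition separates_exactly {Sigma : Type} {n : nat} (M : AfA Sigma n)
  (x y : list Sigma) : Prop :=
  (acc_prob M x = 1 /\ acc_prob M y = 0) \/
  (acc_prob M x = 0 /\ acc_prob M y = 1).

(** The states of a 2-state AfA with [v0 + v1 = 1] form the affine line
    [cv t = (1 - t, t)], and a column-stochastic matrix with columns [cv s0] and
    [cv s1] acts on it as the affine map [t |-> s0 + t (s1 - s0)].  Given a letter
    [a] with [|x|_a = p <> q = |y|_a], let [a] act as [t |-> t + 1], let the other
    letters act trivially, and let the end-marker rescale [t |-> (t - p) / (q - p)].
    The final vector of a word [w] is then [cv ((|w|_a - p) / (q - p))], which is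
    [cv 0 = (1, 0)] for [x] and [cv 1 = (0, 1)] for [y]; accepting exactly state 1
    separates them. *)
From Stdlib Require Import Reals List Lra FunctionalExtensionality.
Open Scope R_scope.

Definition cv (t : R) (i : nat) : R :=
  match i with 0%nat => 1 - t | _ => t end.

Definition cvmx (s0 s1 : R) (i j : nat) : R :=
  cv (match j with 0%nat => s0 | _ => s1 end) i.

Lemma sumR_cvmx_col (s0 s1 : R) (j : nat) : sumR 2 (fun i => cvmx s0 s1 i j) = 1.
Proof. unfold cvmx; destruct j; simpl; lra. Qed.

Lemma mv_cvmx (s0 s1 t : R) : mv 2 (cvmx s0 s1) (cv t) = cv (s0 + t * (s1 - s0)).
Proof.
  apply functional_extensionality; intros [|i]; unfold mv, cvmx; simpl; ring.
Qed.

Lemma acc_prob_cv0 {Sigma : Type} (M : AfA Sigma 2) (w : list Sigma) :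
  accepting M 0%nat = false -> final_vec M w = cv 0 -> acc_prob M w = 0.
Proof.
  intros Hrej Hw; unfold acc_prob; rewrite Hw; simpl; rewrite Hrej.
  destruct (accepting M 1%nat); rewrite ?Rabs_R0, ?Rminus_0_r, ?Rabs_R1; field.
Qed.

Lemma acc_prob_cv1 {Sigma : Type} (M : AfA Sigma 2) (w : list Sigma) :
  accepting M 0%nat = false -> accepting M 1%nat = true ->
  final_vec M w = cv 1 -> acc_prob M w = 1.
Proof.
  intros Hrej Hacc Hw; unfold acc_prob; rewrite Hw; simpl; rewrite Hrej, Hacc.
  rewrite Rminus_diag, Rabs_R0, Rabs_R1; field.
Qed.

Section Counter.

Variable Sigma : Type.
Variable dec : forall a b : Sigma, {a = b} + {a <> b}.
Variable a : Sigma.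
Variables p q : R.

Definition counter_trans (o : option Sigma) : nat -> nat -> R :=
  match o with
  | Some b => if dec b a then cvmx 1 2 else cvmx 0 1
  | None => cvmx (- p / (q - p)) ((1 - p) / (q - p))
  end.

Definition counter_afa : AfA Sigma 2 :=
  mkAfA Sigma 2 counter_trans (cv 0) (fun i => Nat.eqb i 1).

Lemma counter_afa_wf : AfA_wf counter_afa.
Proof.
  split.
  - intros [b|] j _; simpl; [destruct (dec b a)|]; apply sumR_cvmx_col.
  - simpl; lra.
Qed.

Lemma fold_counter_trans (w : list Sigma) (t : R) :
  fold_left (fun v b => mv 2 (counter_trans (Some b)) v) w (cv t) =
  cv (t + INR (occ dec a w)).
Proof.
  revert t; induction w as [|b w IH]; intros t; simpl.
  - unfold occ; simpl; f_equal; ring.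
  - unfold occ; simpl; destruct (dec b a) as [_|_]; rewrite mv_cvmx, IH;
      unfold occ; rewrite ?S_INR; f_equal; ring.
Qed.

Lemma final_vec_counter (w : list Sigma) :
  q - p <> 0 -> final_vec counter_afa w = cv ((INR (occ dec a w) - p) / (q - p)).
Proof.
  intros Hpq; unfold final_vec; simpl.
  rewrite fold_counter_trans, mv_cvmx; f_equal; field; exact Hpq.
Qed.

End Counter.

Theorem mainTheorem8 :
  forall (Sigma : Type) (dec : forall a b : Sigma, {a = b} + {a <> b})
         (enum : list Sigma), (forall a : Sigma, In a enum) ->
  forall x y : list Sigma, easy_pair dec x y ->
  exists M : AfA Sigma 2, AfA_wf M /\ separates_exactly M x y.
Proof.
  intros Sigma dec _ _ x y [_ [a Hxy]].
  set (p := INR (occ dec a x)); set (q := INR (occ dec a y)).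
  assert (Hpq : q - p <> 0).
  { intro E; apply Hxy, INR_eq; unfold p, q in E; lra. }
  exists (counter_afa Sigma dec a p q); split; [apply counter_afa_wf|].
  right; split.
  - apply acc_prob_cv0; [reflexivity|].
    rewrite final_vec_counter by exact Hpq; fold p; f_equal; field; exact Hpq.
  - apply acc_prob_cv1; [reflexivity|reflexivity|].
    rewrite final_vec_counter by exact Hpq; fold q; f_equal; field; exact Hpq.
Qed.
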